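(* Let $\mathcal F_0\subset\mathcal F_1\subset\dots\subset\mathcal F_T$ be a filtration, $\alpha=(\alpha_k,\dots,\alpha_{k_{\max}})$ a probability distribution on $\{k,\dots,k_{\max}\}$, $c_{\max}>0$ and $\delta\in(0,1)$. Let $i_1,\dots,i_T$ be random indices with $i_t$ being $\mathcal F_t$-measurable, distributed according to $\alpha$, and independent of $\mathcal F_{t-1}$, and let $c_1,\dots,c_T\in[0,c_{\max}]$ with $c_t$ being $\mathcal F_{t-1}$-measurable. Define $C^{\mathsf a}_t=\sum_{\tau\le t}c_\tau$, $C^{\mathsf r}_t=\sqrt{t\sum_{\tau\le t}c_\tau^2}$, $C^{\mathsf a}_{t,i}=\sum_{\tau\le t}\mathbf 1[i_\tau=i]c_\tau$ and $C^{\mathsf r}_{t,i}=\sqrt{\big(\sum_{\tau\le t}\mathbf 1[i_\tau=i]\big)\big(\sum_{\tau\le t}\mathbf 1[i_\tau=i]c_\tau^2\big)}$. Then for any fixed $i$, with probability at least $1-3\delta$, for all $t\le T$, $$C^{\mathsf a}_{t,i}\le1.25\alpha_iC^{\mathsf a}_t+21c_{\max}\log(T/\delta),$$ $$C^{\mathsf r}_{t,i}\le1.25\alpha_iC^{\mathsf r}_t+8c_{\max}\sqrt{\alpha_it\log(T/\delta)}+21c_{\max}\log(T/\delta).$$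
   Context: In the paper, $c_t$ is the corruption level of round $t$, chosen by an adaptive adversary based on the history up to round $t-1$, and $i_t$ is the index of the base algorithm sampled independently from $\alpha$ in round $t$ of the procedure BASIC; $C^{\mathsf a}_{t,i}$, $C^{\mathsf r}_{t,i}$ are the (arithmetic / root-mean-square type) corruption experienced by base algorithm $i$. $\log$ is the natural logarithm. *)

From HB Require Import structures.
From mathcomp Require Import all_boot all_order all_algebra.
From mathcomp Require Import all_classical all_reals all_analysis.
Set Implicit Arguments. Unset Strict Implicit. Unset Printing Implicit Defensive.
Import Order.TTheory GRing.Theory Num.Theory.
Local Open Scope classical_set_scope.
Local Open Scope ring_scope.

Definition filtration d (Omega : measurableType d) (F : nat -> set (set Omega))
    (T : nat) : Prop :=
  [/\ (forall t, (t <= T)%N -> sigma_algebra setT (F t)),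
      (forall t, (t <= T)%N -> F t `<=` measurable) &
      (forall t, (t < T)%N -> F t `<=` F t.+1)].

(* X : Omega -> nat is G-measurable (nat carries the discrete sigma-algebra). *)
Definition nat_measurable_wrt d (Omega : measurableType d)
    (G : set (set Omega)) (X : Omega -> nat) : Prop :=
  forall j : nat, G (X @^-1` [set j]).

Definition real_measurable_wrt d (Omega : measurableType d) (R : realType)
    (G : set (set Omega)) (X : Omega -> R) : Prop :=
  forall B : set R, measurable B -> G (X @^-1` B).

Definition Ca (R : realType) (Omega : Type) (c : nat -> Omega -> R)
    (t : nat) (w : Omega) : R :=
  \sum_(1 <= tau < t.+1) c tau w.

Definition Cr (R : realType) (Omega : Type) (c : nat -> Omega -> R)
    (t : nat) (w : Omega) : R :=
  Num.sqrt (t%:R * \sum_(1 <= tau < t.+1) (c tau w) ^+ 2).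

Definition Cai (R : realType) (Omega : Type) (c : nat -> Omega -> R)
    (idx : nat -> Omega -> nat) (t i : nat) (w : Omega) : R :=
  \sum_(1 <= tau < t.+1) (idx tau w == i)%:R * c tau w.

Definition Cri (R : realType) (Omega : Type) (c : nat -> Omega -> R)
    (idx : nat -> Omega -> nat) (t i : nat) (w : Omega) : R :=
  Num.sqrt ((\sum_(1 <= tau < t.+1) (idx tau w == i)%:R) *
            (\sum_(1 <= tau < t.+1) (idx tau w == i)%:R * (c tau w) ^+ 2)).

From HB Require Import structures.
From mathcomp Require Import all_boot all_order all_algebra.
From mathcomp Require Import all_classical all_reals all_analysis.
From mathcomp Require Import measurable_realfun.
From mathcomp Require Import ring lra.
Import Order.TTheory GRing.Theory Num.Theory.
Set Implicit Arguments. Unset Strict Implicit. Unset Printing Implicit Defensive.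
Local Open Scope classical_set_scope.
Local Open Scope ring_scope.

(* Fix x among c, 1 and c^2, and the rate lam = 1 / (5 max x). As x_tau is
   F_(tau-1)-measurable and i_tau is independent of F_(tau-1) with
   P(i_tau = i) = alpha_i, E[exp (lam 1[i_tau = i] x_tau) | F_(tau-1)] equals
   1 + phi_tau <= exp phi_tau, where phi_tau = alpha_i (e^(lam x_tau) - 1) is
   the [compensator]. Hence exp S_t, with
   S_t = sum_(tau <= t) (lam 1[i_tau = i] x_tau - phi_tau), is a nonnegative
   supermartingale started at 1, and by Markov's inequality S_t >= log (T / delta)
   has probability at most delta / T; a union bound over t and the three choices
   of x costs 3 delta. Off this event, e^y - 1 <= 5 y / 4 on [0, 1/5] turns
   S_t < log (T / delta) into
   sum 1[i_tau = i] x_tau <= 1.25 alpha_i sum x_tau + 5 (max x) log (T / delta):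
   for x = c this is the bound on C^a_{t,i}, and multiplying the bounds for
   x = 1 and x = c^2 gives the one on C^r_{t,i}. *)

Section real_inequalities.
Variable R : realType.

Lemma expR_sub1_le (y : R) : 0 <= y <= 1/5 -> expR y - 1 <= 5/4 * y.
Proof.
case/andP=> y_ge0 y_le.
have : (1 - y) * expR y <= expR (- y) * expR y.
  by rewrite ler_wpM2r ?expR_ge0 // expR_ge1Dx.
rewrite -expRD addNr expR0; nra.
Qed.

Lemma sum_le_of_exp_exponent_lt (a lam L : R) (s : seq nat) (y z : nat -> R) :
  0 <= a -> 0 < lam -> (forall tau, tau \in s -> 0 <= lam * z tau <= 1/5) ->
  \sum_(tau <- s) (lam * y tau - a * (expR (lam * z tau) - 1)) < L ->
  \sum_(tau <- s) y tau <= 5/4 * a * \sum_(tau <- s) z tau + L / lam.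
Proof.
move=> a_ge0 lam_gt0 z_small.
rewrite sumrB -!mulr_sumr => lt_L.
have : \sum_(tau <- s) (expR (lam * z tau) - 1) <= 5/4 * lam * \sum_(tau <- s) z tau.
  rewrite mulr_sumr big_seq [leRHS]big_seq; apply: ler_sum => tau /z_small.
  by rewrite -mulrA; exact: expR_sub1_le.
have : lam * (L / lam) = L by rewrite mulrC divfK // gt_eqF.
set Y := \sum_(tau <- s) y tau in lt_L *; set Z := \sum_(tau <- s) z tau.
set X := \sum_(tau <- s) _ in lt_L *; set Q := L / lam => lamQ X_le.
have : a * X <= a * (5/4 * lam * Z) by rewrite ler_wpM2l.
nra.
Qed.

Lemma sqrt_mul_affine_le (a t L c N S Q : R) :
  0 <= a -> 0 <= t -> 0 <= L -> 0 <= c -> 0 <= N -> 0 <= S -> 0 <= Q ->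
  Q <= t * c ^+ 2 -> N <= 5/4 * a * t + 5 * L -> S <= 5/4 * a * Q + 5 * c ^+ 2 * L ->
  Num.sqrt (N * S) <=
  5/4 * a * Num.sqrt (t * Q) + 8 * c * Num.sqrt (a * t * L) + 21 * c * L.
Proof.
move=> a_ge0 t_ge0 L_ge0 c_ge0 N_ge0 S_ge0 Q_ge0 Q_le N_le S_le.
have u_ge0 := sqrtr_ge0 (t * Q); have v_ge0 := sqrtr_ge0 (a * t * L).
have u2 : Num.sqrt (t * Q) ^+ 2 = t * Q by rewrite sqr_sqrtr // mulr_ge0.
have v2 : Num.sqrt (a * t * L) ^+ 2 = a * t * L by rewrite sqr_sqrtr // !mulr_ge0.
set u := Num.sqrt (t * Q) in u_ge0 u2 *; set v := Num.sqrt (a * t * L) in v_ge0 v2 *.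
have rhs_ge0 : 0 <= 5/4 * a * u + 8 * c * v + 21 * c * L by rewrite !addr_ge0 // !mulr_ge0.
rewrite -(ger0_norm rhs_ge0) -sqrtr_sqr ler_sqrt ?sqr_ge0 //.
apply: (@le_trans _ _ ((5/4 * a * t + 5 * L) * (5/4 * a * Q + 5 * c ^+ 2 * L))).
  by apply: ler_pM.
have -> : (5/4 * a * t + 5 * L) * (5/4 * a * Q + 5 * c ^+ 2 * L) =
  25/16 * a ^+ 2 * (t * Q) + 25/4 * (a * t * c ^+ 2 * L) + 25/4 * (a * L * Q) +
  25 * (c ^+ 2 * L ^+ 2) by field.
have -> : (5/4 * a * u + 8 * c * v + 21 * c * L) ^+ 2 =
  25/16 * a ^+ 2 * u ^+ 2 + 64 * (c ^+ 2 * v ^+ 2) + 441 * (c ^+ 2 * L ^+ 2) +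
  (20 * (a * u * c * v) + 105/2 * (a * u * c * L) + 336 * (c * v * c * L)) by field.
rewrite u2 v2.
have : a * L * Q <= a * t * c ^+ 2 * L.
  by rewrite [leRHS](_ : _ = a * L * (t * c ^+ 2)) ?ler_wpM2l ?mulr_ge0 //; ring.
have : 0 <= 20 * (a * u * c * v) + 105/2 * (a * u * c * L) + 336 * (c * v * c * L).
  by rewrite !addr_ge0 // !mulr_ge0.
have : c ^+ 2 * (a * t * L) = a * t * c ^+ 2 * L by ring.
have : 0 <= a * t * c ^+ 2 * L by rewrite !mulr_ge0 // sqr_ge0.
have : 0 <= c ^+ 2 * L ^+ 2 by rewrite mulr_ge0 // sqr_ge0.
lra.
Qed.

End real_inequalities.

Lemma measurable_fun_sub_sigma_mono (T : pointedType) d' (Y : measurableType d')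
    (G1 G2 : set (set T)) (f : T -> Y) : G1 `<=` G2 ->
  measurable_fun setT (f : g_sigma_algebraType G1 -> Y) ->
  measurable_fun setT (f : g_sigma_algebraType G2 -> Y).
Proof.
move=> G12 mf _ B mB; apply: (smallest_sub (smallest_sigma_algebra setT G2)).
  exact: subset_trans G12 (@sub_sigma_algebra _ setT G2).
exact: mf measurableT B mB.
Qed.

Section sub_sigma_algebra.
Context d (Omega : measurableType d) (R : realType).
Implicit Types G : set (set Omega).

Lemma measurable_fun_sub_sigma d' (Y : measurableType d') G
    (f : g_sigma_algebraType G -> Y) :
  G `<=` measurable -> measurable_fun setT f -> measurable_fun (setT : set Omega) f.
Proof.
move=> GM mf _ B mB.
exact: (smallest_sub (@sigma_algebra_measurable _ Omega) GM) (mf measurableT B mB).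
Qed.

Import HBNNSimple.

Lemma ge0_integral_eq_on_sub_sigma (mu1 mu2 : {measure set Omega -> \bar R})
    (D1 D2 : set Omega) G (f : g_sigma_algebraType G -> \bar R) :
  G `<=` measurable -> sigma_algebra setT G ->
  measurable D1 -> measurable D2 ->
  (forall A, G A -> mu1 (A `&` D1) = mu2 (A `&` D2)) ->
  measurable_fun setT f -> (forall x, 0 <= f x)%E ->
  (\int[mu1]_(x in D1) f x = \int[mu2]_(x in D2) f x)%E.
Proof.
move=> GM GS mD1 mD2 mu12 mf f0.
pose g := nnsfun_approx (@measurableT _ (g_sigma_algebraType G)) mf.
have fE x : f x = limn (fun n => (g n x)%:E).
  by apply/esym/cvg_lim => //; exact: cvg_nnsfun_approx.
have mg n : measurable_fun (setT : set Omega) (fun x => (g n x)%:E).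
  by apply/measurable_EFinP/(measurable_fun_sub_sigma GM); exact: measurable_funPT.
have g0 n x : (0 <= (g n x)%:E)%E by rewrite lee_fin.
have ndg x : nondecreasing_seq (fun n => (g n x)%:E).
  by move=> m n mn; rewrite lee_fin; exact/lefP/nd_nnsfun_approx.
have Glevel n r : G (g n @^-1` [set r]).
  have : G.-sigma.-measurable (g n @^-1` [set r]).
    by rewrite -[_ @^-1` _]setTI; exact: measurable_funPT.
  by rewrite /measurable /= (sigma_algebra_id GS).
have mlevel n r : measurable (g n @^-1` [set r] : set Omega) by exact/GM/Glevel.
have level_neg n r : (r < 0)%R -> g n @^-1` [set r] = set0.
  by move=> r0; rewrite preimage_nnfun0.
under eq_integral do rewrite fE.
under [RHS]eq_integral do rewrite fE.
rewrite !monotone_convergence //; try by move=> n; exact: measurable_funS (mg n).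
congr (limn _); apply/funext => n.
under eq_integral do rewrite fimfunE -fsumEFin//.
under [RHS]eq_integral do rewrite fimfunE -fsumEFin//.
have mterm r : measurable_fun setT (fun x : Omega => (r * \1_(g n @^-1` [set r]) x)%:E).
  by apply/measurable_EFinP/measurable_funM => //; exact: measurable_indic.
have term0 r x : (0 <= (r * \1_(g n @^-1` [set r]) x)%:E)%E.
  by rewrite EFinM nnfun_muleindic_ge0.
rewrite !ge0_integral_fsum //; try by move=> r; exact: measurable_funS (mterm r).
apply: eq_fsbigr => r _.
pose level r := g n @^-1` [set r].
rewrite (integralZl_indic mD1 level r (level_neg n r) (mlevel n r)).
rewrite (integralZl_indic mD2 level r (level_neg n r) (mlevel n r)).
rewrite !integral_indic //; try exact: mlevel.
by congr (_ * _)%E; apply: mu12; exact: Glevel.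
Qed.

Lemma integral_indep_set (mu : {measure set Omega -> \bar R}) G (E : set Omega)
    (b : R) (f : g_sigma_algebraType G -> \bar R) :
  G `<=` measurable -> sigma_algebra setT G -> measurable E -> 0 <= b ->
  (forall A, G A -> mu (A `&` E) = (b%:E * mu A)%E) ->
  measurable_fun setT f -> (forall x, 0 <= f x)%E ->
  (\int[mu]_(x in E) f x = b%:E * \int[mu]_x f x)%E.
Proof.
move=> GM GS mE b0 indep mf f0.
have mfO := measurable_fun_sub_sigma GM mf.
rewrite -(ge0_integral_mscale mu measurableT (NngNum b0) mfO) //.
apply: ge0_integral_eq_on_sub_sigma => // A GA.
by rewrite setIT indep.
Qed.

End sub_sigma_algebra.

Section probability_lemmas.
Context d (Omega : measurableType d) (R : realType) (P : probability Omega R).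

Lemma ge0_integral_add_indep_set G (E : set Omega) (b : R)
    (h g : g_sigma_algebraType G -> R) :
  G `<=` measurable -> sigma_algebra setT G -> measurable E -> 0 <= b ->
  (forall A, G A -> P (A `&` E) = (b%:E * P A)%E) ->
  measurable_fun setT h -> measurable_fun setT g ->
  (forall x, 0 <= h x) -> (forall x, 0 <= g x) ->
  (\int[P]_x (h x + g x * \1_E x)%:E = \int[P]_x (h x + b * g x)%:E)%E.
Proof.
move=> GM GS mE b0 indep mh mg h0 g0.
have mhO := measurable_fun_sub_sigma GM mh.
have mgO := measurable_fun_sub_sigma GM mg.
have mgE : measurable_fun setT (fun x : Omega => (g x * \1_E x)%:E).
  by apply/measurable_EFinP/measurable_funM => //; exact: measurable_indic.
under eq_integral do rewrite EFinD.
under [RHS]eq_integral do rewrite EFinD.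
rewrite ge0_integralD //; last 3 first.
- by move=> x _; rewrite lee_fin.
- exact/measurable_EFinP.
- by move=> x _; rewrite lee_fin mulr_ge0.
rewrite [RHS]ge0_integralD //; last 4 first.
- by move=> x _; rewrite lee_fin.
- exact/measurable_EFinP.
- by move=> x _; rewrite lee_fin mulr_ge0.
- by apply/measurable_EFinP/measurable_funM => //; exact: measurable_cst.
congr (_ + _)%E.
have -> : (\int[P]_x (g x * \1_E x)%:E = \int[P]_(x in E) (g x)%:E)%E.
  rewrite [RHS]integral_mkcond; apply: eq_integral => x _.
  by rewrite patchE indicE; case: (x \in E); rewrite ?mulr1 ?mulr0.
rewrite (integral_indep_set GM GS mE b0 indep (f := fun x => (g x)%:E)); last 2 first.
- exact/measurable_EFinP.
- by move=> x; rewrite lee_fin.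
under [RHS]eq_integral do rewrite EFinM.
rewrite ge0_integralZl //; first exact/measurable_EFinP.
by move=> x _; rewrite lee_fin.
Qed.

Lemma prob_ge_le_expR_integral (Y : Omega -> R) (L : R) :
  measurable_fun setT Y ->
  (P [set w | (L <= Y w)%R] <= (expR (- L))%:E * \int[P]_w (expR (Y w))%:E)%E.
Proof.
move=> mY; have := chernoff (mfun_Sub (mem_set mY)) L ltr01.
move=> /(_ P); rewrite mul1r muleC /mmt_gen_fun unlock /=.
by under eq_integral do rewrite mulr1.
Qed.

End probability_lemmas.

Section exponential_supermartingale.
Context d (Omega : measurableType d) (R : realType) (P : probability Omega R).
Variables (F : nat -> set (set Omega)) (T : nat) (E : nat -> set Omega).
Variables (a lam : R) (x : nat -> Omega -> R).
Hypothesis filtF : filtration F T.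
Hypothesis a_ge0 : 0 <= a.
Hypothesis lam_ge0 : 0 <= lam.
Hypothesis E_adapted : forall t, (1 <= t <= T)%N -> F t (E t).
Hypothesis E_indep : forall t, (1 <= t <= T)%N -> forall A, F t.-1 A ->
  P (A `&` E t) = (a%:E * P A)%E.
Hypothesis x_ge0 : forall t w, (1 <= t <= T)%N -> 0 <= x t w.
Hypothesis x_predictable : forall t, (1 <= t <= T)%N ->
  measurable_fun setT (x t : g_sigma_algebraType (F t.-1) -> R).

Let F_measurable t : (t <= T)%N -> F t `<=` measurable.
Proof. by case: filtF => _ + _; exact. Qed.

Let F_sigma t : (t <= T)%N -> sigma_algebra setT (F t).
Proof. by case: filtF => + _ _; exact. Qed.

Let F_mono m n : (m <= n <= T)%N -> F m `<=` F n.
Proof.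
case: filtF => _ _ FS; elim: n => [|n IH] /andP[mn nT].
  by move: mn; rewrite leqn0 => /eqP ->.
move: mn; rewrite leq_eqVlt => /orP[/eqP -> //|mn].
by apply: subset_trans (FS n nT); apply: IH; rewrite -ltnS mn ltnW.
Qed.

Definition compensator t w := a * (expR (lam * x t w) - 1).

Definition supermart_exponent t w :=
  \sum_(1 <= tau < t.+1) (lam * \1_(E tau) w * x tau w - compensator tau w).

Lemma supermart_exponentS t : supermart_exponent t.+1 = fun w =>
  supermart_exponent t w + (lam * \1_(E t.+1) w * x t.+1 w - compensator t.+1 w).
Proof. by apply/funext => w; rewrite /supermart_exponent big_nat_recr. Qed.

Lemma measurable_compensator t : (1 <= t <= T)%N ->
  measurable_fun setT (compensator t : g_sigma_algebraType (F t.-1) -> R).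
Proof.
move=> tT; apply: measurable_funM; first exact: measurable_cst.
apply: measurable_funB; last exact: measurable_cst.
apply: measurableT_comp; first exact: measurable_expR.
by apply: measurable_funM; [exact: measurable_cst | exact: x_predictable tT].
Qed.

Lemma measurable_supermart_exponent t : (t <= T)%N ->
  measurable_fun setT (supermart_exponent t : g_sigma_algebraType (F t) -> R).
Proof.
elim: t => [_|t IH tT].
  rewrite (_ : supermart_exponent 0 = cst 0); first exact: measurable_cst.
  by apply/funext => w; rewrite /supermart_exponent big_geq.
have Ft : F t `<=` F t.+1 by apply: F_mono; rewrite leqnSn.
have t1T : (1 <= t.+1 <= T)%N by [].
rewrite supermart_exponentS; apply: measurable_funD.
  by apply: (measurable_fun_sub_sigma_mono Ft); exact: IH (ltnW tT).
apply: measurable_funB; last first.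
  by apply: (measurable_fun_sub_sigma_mono Ft); exact: (measurable_compensator t1T).
apply: measurable_funM; last first.
  by apply: (measurable_fun_sub_sigma_mono Ft); exact: (x_predictable t1T).
apply: measurable_funM; first exact: measurable_cst.
apply: measurable_indic; apply: sub_sigma_algebra; exact: E_adapted.
Qed.

Lemma integral_expR_supermart_exponentS t : (t < T)%N ->
  (\int[P]_w (expR (supermart_exponent t.+1 w))%:E <=
   \int[P]_w (expR (supermart_exponent t w))%:E)%E.
Proof.
move=> tT; have t1T : (1 <= t.+1 <= T)%N by [].
have FtM := F_measurable (ltnW tT).
pose h w := expR (supermart_exponent t w - compensator t.+1 w).
pose g w := h w * (expR (lam * x t.+1 w) - 1).
have mh : measurable_fun setT (h : g_sigma_algebraType (F t) -> R).
  apply: measurableT_comp; first exact: measurable_expR.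
  apply: measurable_funB; first exact: measurable_supermart_exponent (ltnW tT).
  exact: measurable_compensator t1T.
have mg : measurable_fun setT (g : g_sigma_algebraType (F t) -> R).
  apply: measurable_funM => //; apply: measurable_funB; last exact: measurable_cst.
  apply: measurableT_comp; first exact: measurable_expR.
  by apply: measurable_funM; [exact: measurable_cst | exact: x_predictable t1T].
have h_ge0 w : 0 <= h w by rewrite expR_ge0.
have g_ge0 w : 0 <= g w.
  by rewrite mulr_ge0 ?expR_ge0 // subr_ge0 -expR0 ler_expR mulr_ge0 ?x_ge0.
have expRS w : expR (supermart_exponent t.+1 w) = h w + g w * \1_(E t.+1) w.
  rewrite supermart_exponentS /g /h /= indicE.
  case: (_ \in _); rewrite ?(mulr1, mulr0, mul0r, sub0r, addr0) //.
  rewrite -[X in _ = X + _]mulr1 -mulrDr (addrC 1) subrK -expRD.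
  by congr (expR _); ring.
have compensated_le w : h w + a * g w <= expR (supermart_exponent t w).
  have -> : h w + a * g w = h w * (1 + compensator t.+1 w) by rewrite /g /compensator; ring.
  rewrite -[X in _ <= expR X](subrK (compensator t.+1 w)) expRD.
  by apply: ler_wpM2l; [exact: expR_ge0 | exact: expR_ge1Dx].
have mE : measurable (E t.+1) by apply: (F_measurable tT); exact: E_adapted.
under eq_integral do rewrite expRS.
rewrite (ge0_integral_add_indep_set FtM (F_sigma (ltnW tT)) mE a_ge0 (E_indep t1T)
  mh mg h_ge0 g_ge0).
apply: ge0_le_integral => //.
- by move=> w _; rewrite lee_fin; apply: addr_ge0 => //; exact: mulr_ge0.
- apply/measurable_EFinP/measurable_funD; first exact: measurable_fun_sub_sigma FtM mh.
  apply: measurable_funM; first exact: measurable_cst.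
  exact: measurable_fun_sub_sigma FtM mg.
- apply/measurable_EFinP/measurableT_comp; first exact: measurable_expR.
  exact: measurable_fun_sub_sigma FtM (measurable_supermart_exponent (ltnW tT)).
- by move=> w _; rewrite lee_fin.
Qed.

Lemma integral_expR_supermart_exponent_le1 t : (t <= T)%N ->
  (\int[P]_w (expR (supermart_exponent t w))%:E <= 1)%E.
Proof.
elim: t => [_|t IH tT].
  under eq_integral do rewrite /supermart_exponent big_geq // expR0.
  by rewrite integral_cst // mul1e probability_le1.
exact: le_trans (integral_expR_supermart_exponentS tT) (IH (ltnW tT)).
Qed.

Lemma prob_supermart_exponent_ge t (L : R) : (t <= T)%N ->
  (P [set w | (L <= supermart_exponent t w)%R] <= (expR (- L))%:E)%E.
Proof.
move=> tT; have mS := measurable_supermart_exponent tT.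
apply: le_trans (prob_ge_le_expR_integral P L (measurable_fun_sub_sigma (F_measurable tT) mS)) _.
rewrite -[leRHS]mule1 lee_wpmul2l ?lee_fin ?expR_ge0 //.
exact: integral_expR_supermart_exponent_le1.
Qed.

Lemma measurable_supermart_exponent_ge t (L : R) : (t <= T)%N ->
  measurable [set w | (L <= supermart_exponent t w)%R].
Proof.
move=> tT; rewrite -[X in measurable X]setTI; apply: measurable_fun_le => //.
exact: measurable_fun_sub_sigma (F_measurable tT) (measurable_supermart_exponent tT).
Qed.

Lemma supermart_exponent_lt_sum_le t w (L : R) : 0 < lam ->
  (forall tau, (1 <= tau <= t)%N -> 0 <= lam * x tau w <= 1/5) ->
  supermart_exponent t w < L ->
  \sum_(1 <= tau < t.+1) \1_(E tau) w * x tau w <=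
  5/4 * a * \sum_(1 <= tau < t.+1) x tau w + L / lam.
Proof.
move=> lam_gt0 x_small; rewrite /supermart_exponent /compensator.
under eq_bigr do rewrite -mulrA; apply: sum_le_of_exp_exponent_lt => // tau.
by rewrite mem_index_iota ltnS; exact: x_small.
Qed.

End exponential_supermartingale.

Lemma measurable_partial_sum d (Omega : measurableType d) (R : realType)
    (h : nat -> Omega -> R) n t : (t <= n)%N ->
  (forall tau, (1 <= tau <= n)%N -> measurable_fun setT (h tau)) ->
  measurable_fun setT (fun w => \sum_(1 <= tau < t.+1) h tau w).
Proof.
move=> + mh; elim: t => [_|t IH tn].
  by under eq_fun do rewrite big_geq //; exact: measurable_cst.
under eq_fun do rewrite big_nat_recr //=.
by apply: measurable_funD; [exact/IH/ltnW | exact/mh].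
Qed.

Section corruption_bounds.
Context d (Omega : measurableType d) (R : realType) (P : probability Omega R).
Variables (F : nat -> set (set Omega)) (T : nat) (idx : nat -> Omega -> nat) (i : nat).
Variables (a cmax : R) (c : nat -> Omega -> R).
Hypothesis filtF : filtration F T.
Hypothesis a_ge0 : 0 <= a.
Hypothesis cmax_gt0 : 0 < cmax.
Hypothesis idx_adapted : forall t, (1 <= t <= T)%N -> nat_measurable_wrt (F t) (idx t).
Hypothesis idx_indep : forall t, (1 <= t <= T)%N -> forall A, F t.-1 A ->
  P (A `&` idx t @^-1` [set i]) = (a%:E * P A)%E.
Hypothesis c_bound : forall t w, (1 <= t <= T)%N -> 0 <= c t w <= cmax.
Hypothesis c_predictable : forall t, (1 <= t <= T)%N -> real_measurable_wrt (F t.-1) (c t).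

Let hit t := idx t @^-1` [set i].

Let indic_hit t w : \1_(hit t) w = (idx t w == i)%:R :> R.
Proof. by rewrite indicE; case: eqP => h; [rewrite mem_set | rewrite memNset]. Qed.

Let hit_adapted t : (1 <= t <= T)%N -> F t (hit t).
Proof. by move=> tT; exact: idx_adapted. Qed.

Let c_measurable t : (1 <= t <= T)%N ->
  measurable_fun setT (c t : g_sigma_algebraType (F t.-1) -> R).
Proof.
by move=> tT _ B mB; rewrite setTI; apply: sub_sigma_algebra; exact: c_predictable.
Qed.

Let supermart_exponent_tail lam (x : nat -> Omega -> R) : 0 <= lam ->
    (forall t w, (1 <= t <= T)%N -> 0 <= x t w) ->
    (forall t, (1 <= t <= T)%N ->
      measurable_fun setT (x t : g_sigma_algebraType (F t.-1) -> R)) ->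
  forall L t, (t <= T)%N ->
  measurable [set w | (L <= supermart_exponent hit a lam x t w)%R] /\
  (P [set w | (L <= supermart_exponent hit a lam x t w)%R] <= (expR (- L))%:E)%E.
Proof.
move=> lam_ge0 x_ge0 mx L t tT; split.
  by have := measurable_supermart_exponent_ge a lam filtF hit_adapted mx; apply.
have := prob_supermart_exponent_ge filtF a_ge0 lam_ge0 hit_adapted idx_indep x_ge0 mx.
by apply.
Qed.

Definition deviation (L : R) t :=
  [set w | L <= supermart_exponent hit a (5 * cmax)^-1 c t w] `|`
  [set w | L <= supermart_exponent hit a 5^-1 (fun _ _ => 1) t w] `|`
  [set w | L <= supermart_exponent hit a (5 * cmax ^+ 2)^-1 (fun t w => c t w ^+ 2) t w].

Let c_ge0 t w : (1 <= t <= T)%N -> 0 <= c t w.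
Proof. by move=> tT; case/andP: (c_bound w tT). Qed.

Lemma measurable_prob_deviation_le L t : (t <= T)%N ->
  measurable (deviation L t) /\ (P (deviation L t) <= (3 * expR (- L))%:E)%E.
Proof.
move=> tT; have five_gt0 : 0 < 5 :> R by rewrite ltr0n.
have rate_ge0 (y : R) : 0 < y -> 0 <= (5 * y)^-1.
  by move=> y_gt0; rewrite invr_ge0 ltW ?mulr_gt0.
have rate1_ge0 : 0 <= 5^-1 :> R by rewrite invr_ge0 ltW.
have [m1 p1] := supermart_exponent_tail (rate_ge0 _ cmax_gt0) c_ge0 c_measurable L tT.
have [m2 p2] := supermart_exponent_tail (x := fun _ _ => 1) rate1_ge0
  (fun _ _ _ => ler01) (fun _ _ => measurable_cst _) L tT.
have [m3 p3] := supermart_exponent_tail (rate_ge0 _ (exprn_gt0 2 cmax_gt0))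
  (fun t w _ => sqr_ge0 (c t w)) (fun t tT => measurable_funX 2 (c_measurable tT)) L tT.
split; first by apply: measurableU; first exact: measurableU.
rewrite (_ : 3 * _ = expR (- L) + expR (- L) + expR (- L)); last by ring.
rewrite !EFinD; apply: le_trans (measureU2 _ (measurableU _ _ m1 m2) m3) _.
by apply: leeD => //; apply: le_trans (measureU2 _ m1 m2) _; exact: leeD.
Qed.

Lemma sums_le_of_not_deviation L t w : (1 <= t <= T)%N -> ~ deviation L t w ->
  [/\ \sum_(1 <= tau < t.+1) (idx tau w == i)%:R * c tau w <=
        5/4 * a * \sum_(1 <= tau < t.+1) c tau w + 5 * cmax * L,
      \sum_(1 <= tau < t.+1) (idx tau w == i)%:R <= 5/4 * a * t%:R + 5 * L &
      \sum_(1 <= tau < t.+1) (idx tau w == i)%:R * c tau w ^+ 2 <=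
        5/4 * a * \sum_(1 <= tau < t.+1) c tau w ^+ 2 + 5 * cmax ^+ 2 * L].
Proof.
move=> /andP[t_ge1 tT] not_dev.
have x_bound (ymax : R) (x : nat -> Omega -> R) : 0 < ymax ->
    (forall tau, (1 <= tau <= t)%N -> 0 <= x tau w <= ymax) ->
    ~ (L <= supermart_exponent hit a (5 * ymax)^-1 x t w) ->
    \sum_(1 <= tau < t.+1) (idx tau w == i)%:R * x tau w <=
    5/4 * a * \sum_(1 <= tau < t.+1) x tau w + 5 * ymax * L.
  move=> ymax_gt0 x_le /negP; rewrite -ltNge => S_lt.
  have rate_gt0 : 0 < (5 * ymax)^-1 by rewrite invr_gt0 mulr_gt0.
  rewrite (_ : 5 * ymax * L = L / (5 * ymax)^-1); last by rewrite invrK [RHS]mulrC.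
  under eq_bigr do rewrite -indic_hit.
  apply: supermart_exponent_lt_sum_le S_lt => // tau /x_le/andP[x_ge0 x_le'].
  have : x tau w / ymax <= 1 by rewrite ler_pdivrMr // mul1r.
  have : 0 <= x tau w / ymax by rewrite divr_ge0 // ltW.
  rewrite (_ : (5 * ymax)^-1 * x tau w = x tau w / ymax / 5); first lra.
  by field; rewrite lt0r_neq0.
have c_le tau : (1 <= tau <= t)%N -> 0 <= c tau w <= cmax.
  by move=> /andP[tau_ge1 tau_le]; apply: c_bound; rewrite tau_ge1 (leq_trans tau_le tT).
have c2_le tau : (1 <= tau <= t)%N -> 0 <= c tau w ^+ 2 <= cmax ^+ 2.
  by move=> /c_le/andP[c0 cle]; rewrite sqr_ge0 lerXn2r ?nnegrE // (le_trans c0).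
split.
- by apply: x_bound => // dev; apply: not_dev; left; left.
- have := x_bound 1 (fun _ _ => 1) ltr01.
  rewrite !mulr1 sumr_const_nat subn1; under eq_bigr do rewrite mulr1.
  apply=> [tau _|dev]; first by rewrite ler01 lexx.
  by apply: not_dev; left; right.
- apply: (x_bound _ (fun t w => c t w ^+ 2)) => //; first exact: exprn_gt0.
  by move=> dev; apply: not_dev; right.
Qed.

Lemma corruption_bounds_of_not_deviation L t w : 0 <= L -> (1 <= t <= T)%N ->
  ~ deviation L t w ->
  Cai c idx t i w <= 5 / 4 * a * Ca c t w + 21 * cmax * L /\
  Cri c idx t i w <= 5 / 4 * a * Cr c t w + 8 * cmax * Num.sqrt (a * t%:R * L)
                     + 21 * cmax * L.
Proof.
move=> L_ge0 tT /(sums_le_of_not_deviation tT) [Sc S1 Sc2].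
split.
  have : 0 <= cmax * L by rewrite mulr_ge0 // ltW.
  by rewrite /Cai /Ca; lra.
apply: sqrt_mul_affine_le => //; try by rewrite ?ler0n ?ltW.
1-3: by apply: sumr_ge0 => tau _; rewrite ?sqr_ge0 //; apply: mulr_ge0; rewrite ?sqr_ge0.
apply: (@le_trans _ _ (\sum_(1 <= tau < t.+1) cmax ^+ 2)).
  apply: ler_sum_nat => tau /andP[tau_ge1 tau_lt].
  have /andP[c0 cle] : 0 <= c tau w <= cmax.
    by apply: c_bound; rewrite tau_ge1 -ltnS (leq_trans tau_lt) // ltnS; case/andP: tT.
  by rewrite lerXn2r ?nnegrE // (le_trans c0).
by rewrite sumr_const_nat subn1 mulr_natl.
Qed.

Definition corruption_bounded (L : R) := [set w | forall t, (1 <= t <= T)%N ->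
  Cai c idx t i w <= 5 / 4 * a * Ca c t w + 21 * cmax * L /\
  Cri c idx t i w <= 5 / 4 * a * Cr c t w + 8 * cmax * Num.sqrt (a * t%:R * L)
                     + 21 * cmax * L].

Lemma measurable_corruption_bounded (L : R) : measurable (corruption_bounded L).
Proof.
have [_ F_meas _] := filtF.
have mc tau : (1 <= tau <= T)%N -> measurable_fun setT (c tau).
  move=> /[dup] tauT /andP[_ /(leq_trans (leq_pred _))/F_meas FM].
  exact: measurable_fun_sub_sigma FM (c_measurable tauT).
have mhit tau : (1 <= tau <= T)%N ->
    measurable_fun setT (fun w => (idx tau w == i)%:R : R).
  move=> tauT; under eq_fun do rewrite -indic_hit.
  by apply/measurable_indic/F_meas; [case/andP: tauT | exact: hit_adapted].
have msqrt : measurable_fun setT (@Num.sqrt R).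
  exact: continuous_measurable_fun (@sqrt_continuous R).
have mCa t : (t <= T)%N -> measurable_fun setT (Ca c t).
  by move=> tT; exact: measurable_partial_sum tT mc.
have mCai t : (t <= T)%N -> measurable_fun setT (Cai c idx t i).
  move=> tT; apply: measurable_partial_sum tT _ => tau tauT.
  by apply: measurable_funM; [exact: mhit | exact: mc].
have mCr t : (t <= T)%N -> measurable_fun setT (Cr c t).
  move=> tT; apply: measurableT_comp msqrt _.
  apply: measurable_funM; first exact: measurable_cst.
  by apply: measurable_partial_sum tT _ => tau tauT; exact/measurable_funX/mc.
have mCri t : (t <= T)%N -> measurable_fun setT (Cri c idx t i).
  move=> tT; apply: measurableT_comp msqrt _.
  apply: measurable_funM; first exact: measurable_partial_sum tT mhit.
  apply: measurable_partial_sum tT _ => tau tauT.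
  by apply: measurable_funM; [exact: mhit | exact/measurable_funX/mc].
rewrite (_ : corruption_bounded L = \bigcap_(t in [set t | (1 <= t <= T)%N])
    ([set w | Cai c idx t i w <= 5 / 4 * a * Ca c t w + 21 * cmax * L] `&`
     [set w | Cri c idx t i w <= 5 / 4 * a * Cr c t w +
        8 * cmax * Num.sqrt (a * t%:R * L) + 21 * cmax * L])); last first.
  by apply/seteqP; split => w /= w_bounded t /w_bounded.
apply: bigcap_measurableType => t /andP[_ tT].
apply: measurableI; rewrite -[X in measurable X]setTI; apply: measurable_fun_le => //.
- exact: mCai.
- by apply: measurable_funD => //; apply: measurable_funM => //; exact: mCa.
- exact: mCri.
- apply: measurable_funD => //; apply: measurable_funD => //.
  by apply: measurable_funM => //; exact: mCr.
Qed.

Lemma prob_corruption_bounded (L : R) : 0 <= L ->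
  ((1 - 3 * (T%:R * expR (- L)))%:E <= P (corruption_bounded L))%E.
Proof.
move=> L_ge0; set good := corruption_bounded L.
have m_good := measurable_corruption_bounded L.
have bad_sub : ~` good `<=` \big[setU/set0]_(k < T) deviation L k.+1.
  move=> w not_good; apply: contrapT => not_dev; apply: not_good => t tT.
  apply: corruption_bounds_of_not_deviation => // dev; apply: not_dev.
  have [t_gt0 tT'] := andP tT.
  rewrite -(bigcup_mkord T (fun k => deviation L k.+1)).
  by exists t.-1; rewrite /= ?prednK.
have bad_le := content_subadditive P (fun k kT => (measurable_prob_deviation_le L kT).1)
  (measurableC m_good) bad_sub.
have sum_le : (\sum_(k < T) P (deviation L k.+1) <= (3 * (T%:R * expR (- L)))%:E)%E.
  apply: le_trans (_ : \sum_(k < T) (3 * expR (- L))%:E <= _)%E.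
    by apply: lee_sum => k _; exact: (measurable_prob_deviation_le L (ltn_ord k)).2.
  by rewrite sumEFin sumr_const card_ord lee_fin -[_ *+ T]mulr_natl mulrCA.
rewrite -[good]setCK probability_setC; last exact: measurableC.
rewrite EFinB.
by apply: leeB => //; exact: le_trans bad_le sum_le.
Qed.

End corruption_bounds.

Unset Implicit Arguments.
Theorem lemma15 (R : realType) (d : measure_display) (Omega : measurableType d)
    (P : probability Omega R) (T : nat) (F : nat -> set (set Omega))
    (k kmax : nat) (alpha : nat -> R) (cmax delta : R)
    (idx : nat -> Omega -> nat) (c : nat -> Omega -> R) (i : nat) :
  filtration F T ->
  (k <= kmax)%N ->
  (forall j, (k <= j <= kmax)%N -> 0 <= alpha j) ->
  \sum_(k <= j < kmax.+1) alpha j = 1 ->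
  0 < cmax -> 0 < delta < 1 ->
  (* the random indices i_t *)
  (forall t, (1 <= t <= T)%N -> nat_measurable_wrt (F t) (idx t)) ->
  (forall t w, (1 <= t <= T)%N -> (k <= idx t w <= kmax)%N) ->
  (forall t, (1 <= t <= T)%N -> forall A, F t.-1 A ->
     forall j, (k <= j <= kmax)%N ->
       (P (A `&` (idx t @^-1` [set j])) = (alpha j)%:E * P A)%E) ->
  (* the corruption levels c_t *)
  (forall t w, (1 <= t <= T)%N -> 0 <= c t w <= cmax) ->
  (forall t, (1 <= t <= T)%N -> real_measurable_wrt (F t.-1) (c t)) ->
  (* the fixed index i *)
  (k <= i <= kmax)%N ->
  ((1 - 3 * delta)%:E <=
   P [set w | forall t, (1 <= t <= T)%N ->
       (Cai c idx t i w <= 5 / 4 * alpha i * Ca c t w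
                          + 21 * cmax * ln (T%:R / delta)
       /\ Cri c idx t i w <= 5 / 4 * alpha i * Cr c t w
                          + 8 * cmax * Num.sqrt (alpha i * t%:R * ln (T%:R / delta))
                          + 21 * cmax * ln (T%:R / delta))%R])%E.
Proof.
move=> filtF _ alpha_ge0 _ cmax_gt0 /andP[delta_gt0 delta_lt1] idx_adapted _ idx_indep
  c_bound c_predictable i_range.
set L := ln (T%:R / delta).
have L_ge0 : 0 <= L.
  rewrite /L; have [->|T_gt0] := posnP T; first by rewrite ln0 // mul0r.
  by apply: ln_ge0; rewrite ler_pdivlMr // mul1r (le_trans (ltW delta_lt1)) // ler1n.
have T_expL : T%:R * expR (- L) <= delta.
  rewrite /L; have [->|T_gt0] := posnP T; first by rewrite mul0r ltW.
  by rewrite expRN lnK ?posrE ?divr_gt0 ?ltr0n // invf_div mulrC divfK // pnatr_eq0 -lt0n.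
apply: le_trans (prob_corruption_bounded filtF (alpha_ge0 _ i_range) cmax_gt0 idx_adapted
  (fun t tT A FA => idx_indep t tT A FA i i_range) c_bound c_predictable L_ge0).
by rewrite lee_fin; lra.
Qed.
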